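(* Let $\delta\in(0,1)$ and let $I=\{a_1,\dots,a_N\}$ be a set of $N$ real values presented in a uniformly random order. Run the following online procedure: set $A=\emptyset$, $u=N\delta/2$, $M=-\infty$, $L=4\ln(2/\delta)$; for $i=1,\dots,N$, when the $i$-th value $x_i$ arrives, if $x_i>M$ then set $M\leftarrow x_i$ and, if moreover $i\ge u$ and $|A|<L$, add $x_i$ to $A$. At the end output $A$ and $A^*=\max_{x\in A}x$. Then with probability at least $1-\delta$, $A^*=\max(a_1,\dots,a_N)$. *)

From mathcomp Require Import all_boot all_order all_algebra all_fingroup.
From mathcomp Require Import all_classical all_reals all_analysis.
Set Implicit Arguments. Unset Strict Implicit. Unset Printing Implicit Defensive.
Import Order.TTheory GRing.Theory Num.Theory.
Local Open Scope ring_scope.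

Section Proc.
Variable R : realType.
Variable delta : R.

Definition thr_u (N : nat) : R := N%:R * delta / 2.
Definition cap_L : R := 4 * ln (2 / delta).

Definition step (N i : nat) (x : R) (st : seq R * \bar R) : seq R * \bar R :=
  let: (A, M) := st in
  if (M < x%:E)%E then
    (if (thr_u N <= i%:R) && ((size A)%:R < cap_L) then rcons A x else A, x%:E)
  else (A, M).

(* i is the (1-based) index of the head of xs *)
Fixpoint run_aux (N i : nat) (xs : seq R) (st : seq R * \bar R) :=
  match xs with
  | [::] => st
  | x :: xs' => run_aux N i.+1 xs' (step N i x st)
  end.

Definition run_A (xs : seq R) : seq R := (run_aux (size xs) 1 xs ([::], -oo%E)).1.

Definition Astar (A : seq R) : \bar R := (\big[maxe/-oo]_(x <- A) x%:E)%E.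
End Proc.

Definition arrivals (R : realType) (N : nat) (a : 'I_N -> R) (s : 'S_N) : seq R :=
  [seq a (s i) | i <- enum 'I_N].

(** The elements that the procedure can put into [A] are the records
    (left-to-right maxima) of the arrival sequence, and the overall maximum is
    the last record.  Let [c] be the number of records arriving at a position
    [i >= u]: every one of them is added while [A] has room, so the output is
    correct as soon as [1 <= c] and [c - 1 < L].

    The record indicators of a uniformly random order are independent with
    probabilities [1/i], which is the generating function identity
    [sum_sigma prod_{records k} z_k = prod_{i=1}^N (z_i + i - 1)]; it follows
    by induction on [N], since the last arrival is a record iff it is the
    largest value, whatever the order of the others.  Taking [z_k = 0] for
    [k >= u] gives [P(c = 0) <= u / N = delta / 2]; taking [z_k = e^(1/2)]
    for [k >= u] gives [E[e^(c/2)] <= (N + 1) / max(u, 1)], and Markov's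
    inequality at [c >= L + 1], where [e^(L/2) = (2/delta)^2], gives
    [P(c > L) <= delta / 2]. *)

From mathcomp Require Import all_boot all_order all_algebra all_fingroup.
From mathcomp Require Import all_classical all_reals all_analysis.
From mathcomp Require Import ring lra.
Import Order.TTheory GRing.Theory Num.Theory.
Local Open Scope ring_scope.

Set Implicit Arguments.
Unset Strict Implicit.
Unset Printing Implicit Defensive.

Lemma sum_permutations_rev (T : eqType) (V : nmodType) (F : seq T -> V) s :
  \sum_(t <- permutations s) F (rev t) = \sum_(t <- permutations s) F t.
Proof.
rewrite -(big_map rev xpredT F); apply/perm_big/uniq_perm => [||t].
- by rewrite (map_inj_uniq (can_inj revK)) permutations_uniq.
- exact: permutations_uniq.
by rewrite -{1}(revK t) (mem_map (can_inj revK)) !mem_permutations perm_rev.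
Qed.

Lemma prodr_if_count (K : pzSemiRingType) (I : Type) (P : pred I) (c : K) r :
  \prod_(i <- r) (if P i then c else 1) = c ^+ count P r.
Proof. by rewrite -big_mkcond big_const_seq iter_mulr_1. Qed.

Lemma count_markov (R : numDomainType) (T : Type) (P : pred T) (f : T -> R) b s :
  (forall t, 0 <= f t) -> (forall t, P t -> b <= f t) ->
  (count P s)%:R * b <= \sum_(t <- s) f t.
Proof.
move=> f_ge0 P_le_f; elim: s => [|t s IH]; first by rewrite big_nil mul0r.
rewrite big_cons /= natrD mulrDl lerD //.
by case: (boolP (P t)) => [/P_le_f|_]; rewrite ?mul1r ?mul0r.
Qed.

Section Records.
Variable R : realType.
Implicit Types (x y : R) (xs s t : seq R) (M : \bar R).

Lemma Astar_cons x xs : Astar (x :: xs) = maxe x%:E (Astar xs).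
Proof. by rewrite /Astar big_cons. Qed.

Lemma Astar_rcons xs x : Astar (rcons xs x) = maxe (Astar xs) x%:E.
Proof.
elim: xs => [|y xs IH]; first by rewrite /= !Astar_cons /Astar big_nil maxC.
by rewrite rcons_cons !Astar_cons IH maxA.
Qed.

Lemma Astar_lt xs y : (Astar xs < y%:E)%E = all (fun x => x < y) xs.
Proof.
elim: xs => [|x xs IH]; first by rewrite /Astar big_nil ltNyr.
by rewrite Astar_cons gt_max lte_fin IH.
Qed.

Lemma Astar_perm s t : perm_eq s t -> Astar s = Astar t.
Proof. exact: perm_big. Qed.

Lemma exists_seq_max s : s != [::] -> exists2 m, m \in s & all (fun x => x <= m) s.
Proof.
elim: s => [//|x s IH] _; case: (eqVneq s [::]) => [->|/IH[m ms s_le_m]].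
  by exists x; rewrite ?mem_head //= lexx.
have [x_le_m|m_lt_x] := leP x m.
  by exists m; rewrite ?inE ?ms ?orbT //= x_le_m.
exists x; rewrite ?mem_head //= lexx /=.
by apply/allP => y /(allP s_le_m) y_le_m; rewrite (le_trans y_le_m) ?ltW.
Qed.

Lemma count_max_rem s : uniq s -> s != [::] ->
  count (fun x => (Astar (rem x s) < x%:E)%E) s = 1%N.
Proof.
move=> s_uniq s_n0; have [m ms s_le_m] := exists_seq_max s_n0.
have <- : count_mem m s = 1%N by rewrite count_uniq_mem ?ms.
apply: eq_in_count => x xs /=; rewrite Astar_lt.
have [->|x_neq_m] := eqVneq x m.
  apply/allP => y; rewrite (mem_rem_uniq _ s_uniq) inE => /andP[y_neq_m ys].
  by rewrite lt_neqAle y_neq_m (allP s_le_m).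
apply/allP => /(_ m); rewrite (mem_rem_uniq _ s_uniq) inE eq_sym x_neq_m ms.
by rewrite ltNge (allP s_le_m _ xs) => /(_ isT).
Qed.

Lemma sum_max_rem (K : pzSemiRingType) (c : K) s : uniq s -> s != [::] ->
  \sum_(x <- s) (if (Astar (rem x s) < x%:E)%E then c else 1) = c + (size s).-1%:R.
Proof.
move=> s_uniq s_n0; pose P x := (Astar (rem x s) < x%:E)%E.
rewrite (bigID P) /= (eq_bigr (fun=> c)) => [|x]; last by rewrite /P => ->.
rewrite [X in _ + X](eq_bigr (fun=> 1)) => [|x]; last by rewrite /P => /negbTE ->.
rewrite !big_const_seq !iter_addr_0 count_max_rem //.
by rewrite -(count_predC P s) count_max_rem.
Qed.

Fixpoint record_positions (i : nat) M xs : seq nat :=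
  if xs is x :: xs' then
    if (M < x%:E)%E then i :: record_positions i.+1 x%:E xs'
    else record_positions i.+1 M xs'
  else [::].

Lemma record_positions_nil i M xs :
  (record_positions i M xs == [::]) = (Astar xs <= M)%E.
Proof.
elim: xs i M => [|x xs IH] i M /=; first by rewrite /Astar big_nil leNye.
by rewrite Astar_cons ge_max; case: ltP => //= _; apply: IH.
Qed.

Lemma record_positions_ge i M xs : all (leq i) (record_positions i M xs).
Proof.
elim: xs i M => [|x xs IH] i M //=.
have ge_i j N : all (leq j) (record_positions j.+1 N xs).
  by apply: sub_all (IH j.+1 N) => k; apply: ltnW.
by case: ifP => _ /=; rewrite ?leqnn ge_i.
Qed.

Lemma record_positions_rcons i M xs x :
  record_positions i M (rcons xs x) =
  record_positions i M xs ++
    (if (maxe M (Astar xs) < x%:E)%E then [:: i + size xs]%N else [::]).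
Proof.
elim: xs i M => [|y xs IH] i M /=.
  by rewrite /Astar big_nil addn0; have /max_idPl -> := leNye M; case: ifP.
rewrite Astar_cons; case: ltP => M_y /=; rewrite IH addnS.
  suff -> : maxe M (maxe y%:E (Astar xs)) = maxe y%:E (Astar xs) by [].
  by apply/max_idPr; rewrite le_max ltW.
by rewrite maxA (max_idPl M_y).
Qed.

Lemma record_generating_function (K : comPzSemiRingType) (z : nat -> K) s : uniq s ->
  \sum_(t <- permutations s) \prod_(k <- record_positions 1 -oo t) z k =
  \prod_(i < size s) (z i.+1 + i%:R).
Proof.
move: {2}(size s) (erefl (size s)) => n; elim: n s => [|n IH] s size_s s_uniq.
  by case: s size_s s_uniq => // _ _; rewrite /= big_seq1 big_nil big_ord0.
have s_n0 : s != [::] by rewrite -size_eq0 size_s.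
rewrite -sum_permutations_rev (perm_big _ (permutationsE _)) ?size_s //.
rewrite big_ord_recr /=.
have := sum_max_rem (z n.+1) s_uniq s_n0; rewrite size_s /= => <-.
rewrite big_allpairs_dep undup_id // big_distrr /=; apply: eq_big_seq => x xs.
have size_rem_x : size (rem x s) = n by rewrite size_rem // size_s.
have := IH _ size_rem_x (rem_uniq x s_uniq); rewrite size_rem_x => <-.
rewrite big_distrl -sum_permutations_rev /=.
apply: eq_big_seq => t; rewrite mem_permutations => t_rem.
rewrite rev_cons revK record_positions_rcons big_cat /=.
have /max_idPr -> := leNye (Astar t).
rewrite (Astar_perm t_rem) (perm_size t_rem) size_rem_x.
by case: ifP; rewrite ?big_seq1 ?big_nil.
Qed.
End Records.

Section Run.
Variables (R : realType) (delta : R) (N : nat).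
Implicit Types (xs A : seq R) (M : \bar R).

Definition late (k : nat) : bool := thr_u delta N <= k%:R.

Lemma run_aux_stable i st xs : (Astar xs <= st.2)%E -> run_aux delta N i xs st = st.
Proof.
elim: xs i st => [//|x xs IH] i [A M] /=.
by rewrite Astar_cons ge_max => /andP[x_le_M xs_le_M]; rewrite ltNge x_le_M IH.
Qed.

Lemma no_late_records_Astar_le i M xs : late i ->
  count late (record_positions i M xs) = 0%N -> (Astar xs <= M)%E.
Proof.
move=> late_i; rewrite -(record_positions_nil i).
have := record_positions_ge i M xs; case: (record_positions i M xs) => //= k r.
move=> /andP[le_ik _]; suff -> : late k by [].
by apply: le_trans late_i _; rewrite ler_nat.
Qed.

(* [Astar A <= M] holds throughout: whatever enters [A] was a running maximum. *)
Lemma run_aux_Astar i A M xs : (Astar A <= M)%E ->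
  let c := count late (record_positions i M xs) in
  (0 < c)%N -> (size A + c).-1%:R < cap_L delta ->
  Astar (run_aux delta N i xs (A, M)).1 = maxe M (Astar xs).
Proof.
elim: xs i A M => [|x xs IH] i A M A_le_M //=.
rewrite Astar_cons; case: ltP => [M_lt_x|x_le_M]; last first.
  by rewrite maxA (max_idPl x_le_M); apply: IH.
rewrite (max_idPr _); last by rewrite le_max ltW.
have A_lt_x : (Astar A < x%:E)%E by apply: le_lt_trans M_lt_x.
rewrite -/(late i); case late_i: (late i); rewrite /= ?late_i /=; last first.
  by rewrite add0n; apply: IH; rewrite ltW.
rewrite add1n addnS /= => _ room.
have -> : (size A)%:R < cap_L delta.
  by apply: le_lt_trans room; rewrite ler_nat leq_addr.
have Ax : Astar (rcons A x) = x%:E by rewrite Astar_rcons; apply/max_idPr/ltW.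
case: (posnP (count late (record_positions i.+1 x%:E xs))) => [c0|c_gt0].
  have late_Si : late i.+1 by apply: le_trans late_i _; rewrite ler_nat.
  rewrite run_aux_stable /= ?Ax ?(max_idPl _) //; exact: no_late_records_Astar_le c0.
by apply: IH => //; rewrite ?Ax // size_rcons addSn.
Qed.
End Run.

Section ThresholdProduct.
Variables (R : realFieldType) (u : R).

Definition threshold_prod (c : R) (n : nat) : R :=
  \prod_(i < n) ((if u <= i.+1%:R then c else 1) + i%:R).

Lemma threshold_prod_below (c : R) n : n%:R < u -> threshold_prod c n = n`!%:R.
Proof.
elim: n => [|n IH] n_lt_u; first by rewrite /threshold_prod big_ord0.
rewrite /threshold_prod big_ord_recr -/(threshold_prod c n) /= leNgt n_lt_u /=.
rewrite IH; last by apply: lt_trans n_lt_u; rewrite ltr_nat.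
by rewrite factS natrM mulrC -natr1 addrC.
Qed.

Lemma threshold_prod0 n : 0 <= u -> threshold_prod 0 n * n%:R <= n`!%:R * u.
Proof.
move=> u_ge0; elim: n => [|n IH]; first by rewrite mulr0 mul1r.
have [u_le_Sn|Sn_lt_u] := leP u n.+1%:R; last first.
  by rewrite threshold_prod_below // ler_pM2l ?ltr0n ?fact_gt0 // ltW.
rewrite /threshold_prod big_ord_recr -/(threshold_prod 0 n) /= u_le_Sn add0r.
apply: le_trans (ler_wpM2r _ IH) _ => //.
by rewrite factS natrM mulrC mulrA.
Qed.

Lemma threshold_prod_le (q : R) n : 0 <= q <= 2 ->
  threshold_prod q n * Num.min (Num.max u 1) n.+1%:R <= n.+1`!%:R.
Proof.
move=> /andP[q_ge0 q_le2]; elim: n => [|n IH].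
  by rewrite /threshold_prod big_ord0 mul1r ge_min lexx orbT.
have [u_le_Sn|Sn_lt_u] := leP u n.+1%:R; last first.
  rewrite threshold_prod_below // (factS n.+1) natrM mulrC ler_wpM2r //.
  by rewrite ge_min lexx orbT.
have w_le_Sn : Num.max u 1 <= n.+1%:R by rewrite ge_max u_le_Sn ler1n.
have w_le_SSn : Num.max u 1 <= n.+2%:R by rewrite (le_trans w_le_Sn) ?ler_nat.
rewrite (min_idPl w_le_Sn) in IH; rewrite (min_idPl w_le_SSn).
rewrite /threshold_prod big_ord_recr -/(threshold_prod q n) /= u_le_Sn.
rewrite mulrAC (factS n.+1) natrM mulrC.
apply: ler_pM => //; first exact: addr_ge0.
  apply: mulr_ge0; last by rewrite le_max ler01 orbT.
  by apply: prodr_ge0 => i _; case: ifP => _; rewrite addr_ge0.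
by rewrite -addn2 natrD addrC lerD2l.
Qed.
End ThresholdProduct.

Section RandomOrder.
Variables (R : realType) (delta : R) (r : seq R).
Hypotheses (delta_gt0 : 0 < delta) (delta_lt1 : delta < 1).
Hypotheses (r_uniq : uniq r) (r_n0 : (0 < size r)%N).

Let N := size r.
Let u := thr_u delta N.
Let late_records (t : seq R) := count (late delta N) (record_positions 1 -oo t).

Let u_ge0 : 0 <= u.
Proof. by rewrite /u /thr_u divr_ge0 // mulr_ge0 // ltW. Qed.

Lemma sum_pow_late_records (c : R) :
  \sum_(t <- permutations r) c ^+ late_records t = threshold_prod u c N.
Proof.
transitivity (\sum_(t <- permutations r)
    \prod_(k <- record_positions 1 -oo t) (if late delta N k then c else 1)).
  by apply: eq_bigr => t _; rewrite prodr_if_count.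
exact: record_generating_function.
Qed.

Lemma count_no_late_records :
  (count (fun t => late_records t == 0%N) (permutations r))%:R <= N`!%:R * delta / 2.
Proof.
have count_le : (count (fun t => late_records t == 0%N) (permutations r))%:R
    <= threshold_prod u 0 N.
  rewrite -sum_pow_late_records -[X in X <= _]mulr1.
  by apply: count_markov => [t|t /eqP ->]; rewrite ?exprn_ge0.
have := threshold_prod0 N u_ge0; rewrite /u /thr_u.
have N_gt0 : 0 < N%:R :> R by rewrite ltr0n.
nra.
Qed.

(* Markov's inequality for [q ^+ late_records t] with [q = e^(1/2)]:
   [q ^+ k >= q * (2 / delta) ^+ 2] as soon as [k >= cap_L delta + 1]. *)
Lemma count_many_late_records :
  (count (fun t => cap_L delta + 1 <= (late_records t)%:R) (permutations r))%:R
    <= N`!%:R * delta / 2.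
Proof.
set C := (count _ _)%:R; pose q : R := expR 2^-1.
have q_ge : 3 / 2 <= q by have := expR_ge1Dx (2^-1 : R); rewrite /q; lra.
have q_le2 : q <= 2.
  rewrite -lef_pV2 ?posrE ?expR_gt0 // -expRN.
  by apply: le_trans (expR_ge1Dx _); lra.
pose K : R := (2 / delta) ^+ 2.
have q_pow_late k : cap_L delta + 1 <= k%:R -> q * K <= q ^+ k.
  move=> L_le_k; rewrite /q /K -expRM_natl -{1}[2 / delta]lnK ?posrE ?divr_gt0 //.
  rewrite -expRM_natl -expRD ler_expR; move: L_le_k; rewrite /cap_L; lra.
have count_le : C * (q * K) <= threshold_prod u q N.
  rewrite -sum_pow_late_records; apply: count_markov => [t|t]; last exact: q_pow_late.
  by rewrite exprn_ge0 // ltW ?expR_gt0.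
set w := Num.max u 1.
have w_ge1 : 1 <= w by rewrite le_max lexx orbT.
have u_le_w : u <= w by rewrite le_max lexx.
have prod_le : threshold_prod u q N * w <= N.+1`!%:R.
  have w_le_SN : w <= N.+1%:R.
    rewrite ge_max ler1n andbT /u /thr_u ler_pdivrMr // -natr1.
    apply: le_trans (ler_piMr _ (ltW delta_lt1)) _ => //.
    by rewrite mulrDl mul1r -natrM ler_wpDr // ler_nat leq_pmulr.
  have := threshold_prod_le u N (_ : 0 <= q <= 2).
  by rewrite (min_idPl w_le_SN) q_le2 ltW ?expR_gt0 //; apply.
have w_gt0 : 0 < w by apply: lt_le_trans w_ge1.
have C_ge0 : 0 <= C by [].
set F : R := N`!%:R.
have F_ge0 : 0 <= F by [].
have Kd : K * delta ^+ 2 = 4 by rewrite /K; field; rewrite gt_eqF.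
have h1 : C * (q * K) * w <= (N%:R + 1) * F.
  by apply: le_trans (ler_wpM2r (ltW w_gt0) count_le) _; rewrite factS natrM -natr1 in prod_le.
have h2 : C * 6 * w <= (N%:R + 1) * delta * (F * delta).
  have -> : (N%:R + 1) * delta * (F * delta) = (N%:R + 1) * F * delta ^+ 2 by ring.
  apply: le_trans (ler_wpM2r (exprn_ge0 2 (ltW delta_gt0)) h1).
  have -> : C * (q * K) * w * delta ^+ 2 = C * w * (q * (K * delta ^+ 2)) by ring.
  rewrite Kd mulrAC ler_wpM2l ?(mulr_ge0 C_ge0 (ltW w_gt0)) //; lra.
have h3 : (N%:R + 1) * delta <= 3 * w.
  have d_le_w : delta <= w by apply: le_trans w_ge1; exact: ltW.
  move: u_le_w; rewrite /u /thr_u; set Nd := N%:R * delta; rewrite mulrDl mul1r -/Nd; lra.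
have h4 := ler_wpM2r (mulr_ge0 F_ge0 (ltW delta_gt0)) h3.
nra.
Qed.

Lemma count_run_A_max :
  (1 - delta) * N`!%:R <=
    (count (fun t => Astar (run_A delta t) == Astar r) (permutations r))%:R.
Proof.
pose good t := (0 < late_records t)%N && ((late_records t).-1%:R < cap_L delta).
have good_max : {in permutations r, forall t, good t -> Astar (run_A delta t) == Astar r}.
  move=> t; rewrite mem_permutations => t_r /andP[c_gt0 c_small].
  rewrite /run_A (perm_size t_r) -(Astar_perm t_r).
  rewrite (run_aux_Astar (A := [::])) //; last by rewrite /Astar big_nil.
  by rewrite (max_idPr (leNye _)).
have count_good : (count good (permutations r) <=
    count (fun t => Astar (run_A delta t) == Astar r) (permutations r))%N.
  rewrite -(@eq_in_count _ (fun t => good t && (Astar (run_A delta t) == Astar r))).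
    by apply: sub_count => t /andP[].
  by move=> t t_r /=; case good_t: (good t); rewrite /= ?good_max.
have count_bad : (count (predC good) (permutations r) <=
    count (fun t => late_records t == 0%N) (permutations r) +
    count (fun t => (cap_L delta + 1 <= (late_records t)%:R)%R) (permutations r))%N.
  rewrite -count_predUI; apply: leq_trans (leq_addr _ _); apply: sub_count => t.
  rewrite /= /good negb_and -leNgt; case: posnP => [->//|c_gt0] /=.
  by rewrite -(prednK c_gt0) -natr1 lerD2r.
have count_all : (count good (permutations r) + count (predC good) (permutations r))%N = N`!.
  by rewrite count_predC size_permutations.
have := count_no_late_records; have := count_many_late_records.
move: count_good count_bad; rewrite -!(ler_nat R) -count_all !natrD; lra.
Qed.
End RandomOrder.

Lemma card_perm_arrivals (R : realType) N (a : 'I_N -> R) (P : pred (seq R)) :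
  injective a ->
  #|[set s : 'S_N | P (arrivals a s)]| = count P (permutations [seq a i | i <- enum 'I_N]).
Proof.
move=> a_inj; set r := [seq a i | i <- enum 'I_N].
have arrivals_inj : injective (arrivals a).
  move=> s1 s2 /eq_in_map eq_s; apply/permP => i.
  by apply: a_inj; apply: eq_s; rewrite mem_enum.
have arrivals_perm s : perm_eq (arrivals a s) r.
  have -> : arrivals a s = map a (map s (enum 'I_N)) by rewrite -map_comp.
  apply/perm_map/uniq_perm => [||i]; rewrite ?(map_inj_uniq (@perm_inj _ s)) ?enum_uniq //.
  by rewrite mem_enum; apply/mapP; exists ((s^-1)%g i); rewrite ?mem_enum ?permKV.
have arrivals_uniq : uniq [seq arrivals a s | s <- enum 'S_N].
  by rewrite (map_inj_uniq arrivals_inj) enum_uniq.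
have [_ eq_mem] : (size [seq arrivals a s | s <- enum 'S_N] = size (permutations r)) *
    ([seq arrivals a s | s <- enum 'S_N] =i permutations r).
  apply: uniq_min_size arrivals_uniq _ _.
    by move=> _ /mapP[s _ ->]; rewrite mem_permutations arrivals_perm.
  rewrite size_map size_permutations ?(map_inj_uniq a_inj) ?enum_uniq //.
  by rewrite -cardE card_Sn size_map size_enum_ord.
have perm_arrivals : perm_eq [seq arrivals a s | s <- enum 'S_N] (permutations r).
  by apply: uniq_perm eq_mem; rewrite ?permutations_uniq.
rewrite -(seq.permP perm_arrivals) count_map cardsE cardE /enum_mem size_filter.
by rewrite count_filter; apply: eq_count => s; rewrite /= andbT.
Qed.

Theorem proposition1 (R : realType) (delta : R) (N : nat) (a : 'I_N -> R) :
  0 < delta < 1 -> (0 < N)%N -> injective a ->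
  1 - delta <=
    #|[set s : 'S_N |
        Astar (run_A delta (arrivals a s)) == (\big[maxe/-oo]_(i < N) (a i)%:E)%E]|%:R
    / #|[set: 'S_N]|%:R.
Proof.
move=> /andP[delta_gt0 delta_lt1] N_gt0 a_inj.
set r := [seq a i | i <- enum 'I_N].
have r_uniq : uniq r by rewrite map_inj_uniq ?enum_uniq.
have size_r : size r = N by rewrite size_map size_enum_ord.
have -> : (\big[maxe/-oo]_(i < N) (a i)%:E)%E = Astar r by rewrite /Astar big_map big_enum.
rewrite (card_perm_arrivals (fun t => Astar (run_A delta t) == Astar r) a_inj).
rewrite cardsT card_Sn ler_pdivlMr ?ltr0n ?fact_gt0 //.
by rewrite -/r -[in N`!]size_r; apply: count_run_A_max; rewrite ?size_r.
Qed.
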